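(* Let $h=h_{\mathbb{B}^n}$ be the Hilbert distance in the unit ball $\mathbb{B}^n\subset\mathbb{R}^n$, let $c\in\mathbb{B}^n$ and $R>0$, and let $S_h(c,R)=\{x\in\mathbb{B}^n:h_{\mathbb{B}^n}(x,c)=R\}$. Then $S_h(c,R)$ is an ellipsoid of revolution with center \[ c'=\frac{c}{\mathrm{ch}^2(R/2)-|c|^2\,\mathrm{sh}^2(R/2)}, \] whose semi-axis in the direction of $c$ (the minor semi-axis) equals \[ a_{\min}=\frac12\,\frac{(1-|c|^2)\,\mathrm{sh}(R)}{\mathrm{ch}^2(R/2)-|c|^2\,\mathrm{sh}^2(R/2)} \] and every other semi-axis equals \[ a_{\max}=\frac{\mathrm{sh}(R/2)\sqrt{1-|c|^2}}{\sqrt{\mathrm{ch}^2(R/2)-|c|^2\,\mathrm{sh}^2(R/2)}}. \] If $c=0$, then $S_h(c,R)$ is the Euclidean sphere centered at $0$ with radius $\mathrm{th}(R/2)$.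
   Context: Hilbert metric: for distinct $x,y$ in a bounded convex domain $G\subset\mathbb{R}^n$, let $u,v$ be the intersection points of the line through $x,y$ with $\partial G$, ordered $u,x,y,v$ on the line; $h_G(x,y)=\log\frac{|u-y||x-v|}{|u-x||y-v|}$. $\mathrm{sh},\mathrm{ch},\mathrm{th}$ denote the hyperbolic sine, cosine and tangent. *)

From HB Require Import structures.
From mathcomp Require Import all_boot all_order all_algebra.
From mathcomp Require Import all_classical all_reals all_analysis.
Set Implicit Arguments. Unset Strict Implicit. Unset Printing Implicit Defensive.
Import Order.TTheory GRing.Theory Num.Theory.
Local Open Scope classical_set_scope.
Local Open Scope ring_scope.

Definition dotv {R : realType} {n : nat} (u v : 'rV[R]_n) : R :=
  \sum_(i < n) u 0 i * v 0 i.
Definition enorm {R : realType} {n : nat} (u : 'rV[R]_n) : R :=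
  Num.sqrt (dotv u u).

Definition sh {R : realType} (x : R) : R := (expR x - expR (- x)) / 2.
Definition ch {R : realType} (x : R) : R := (expR x + expR (- x)) / 2.
Definition th {R : realType} (x : R) : R := sh x / ch x.

Definition unit_ball (R : realType) (n : nat) : set 'rV[R]_n :=
  [set x | enorm x < 1].
Definition unit_sphere (R : realType) (n : nat) : set 'rV[R]_n :=
  [set x | enorm x = 1].
Arguments unit_ball : clear implicits.
Arguments unit_sphere : clear implicits.

(* d is the Hilbert distance value for distinct x, y of the unit ball:
   u, v are the intersection points of the line through x, y with the
   boundary, ordered u, x, y, v on the line (u = x + s (y - x), s < 0;
   v = x + t (y - x), t > 1). *)
Definition hilbert_ball_value {R : realType} {n : nat} (x y : 'rV[R]_n) (d : R) :=
  exists (u v : 'rV[R]_n) (s t : R),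
    s < 0 /\ 1 < t /\ u = x + s *: (y - x) /\ v = x + t *: (y - x) /\
        u \in unit_sphere R n /\ v \in unit_sphere R n /\
        d = ln ((enorm (u - y) * enorm (x - v)) / (enorm (u - x) * enorm (y - v))).

(* Hilbert distance h_{B^n}(x, y) (0 when x = y). Outside the ball it is
   irrelevant (junk value). *)
Definition hilbert_ball {R : realType} {n : nat} (x y : 'rV[R]_n) : R :=
  if x == y then 0 else xget 0 [set d | hilbert_ball_value x y d].

Definition hilbert_sphere {R : realType} {n : nat} (c : 'rV[R]_n) (r : R) : set 'rV[R]_n :=
  [set x | x \in unit_ball R n /\ hilbert_ball x c = r].

(* Ellipsoid of revolution with center c0, unit symmetry axis e, semi-axis
   a along e and semi-axis b in every direction orthogonal to e. *)
Definition ellipsoid_rev {R : realType} {n : nat} (c0 e : 'rV[R]_n) (a b : R)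
  : set 'rV[R]_n :=
  [set x | (dotv (x - c0) e) ^+ 2 / a ^+ 2
           + (enorm (x - c0) ^+ 2 - (dotv (x - c0) e) ^+ 2) / b ^+ 2 = 1].

Definition esphere {R : realType} {n : nat} (c0 : 'rV[R]_n) (r : R) : set 'rV[R]_n :=
  [set x | enorm (x - c0) = r].

From HB Require Import structures.
From mathcomp Require Import all_boot all_order all_algebra.
From mathcomp Require Import all_classical all_reals all_analysis.
From mathcomp Require Import ring lra.
Set Implicit Arguments. Unset Strict Implicit. Unset Printing Implicit Defensive.
Import Order.TTheory GRing.Theory Num.Theory.
Local Open Scope classical_set_scope.
Local Open Scope ring_scope.

(* Along the chord [x + z (y - x)] the boundary points are the roots of a
   quadratic in [z]; Vieta's formulas turn the cross ratio [Q] into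
   [ch^2 (h / 2) = (Q + 1/Q + 2) / 4 = (1 - x.y)^2 / ((1 - |x|^2) (1 - |y|^2))].
   Hence [S_h(c, R)] is the quadric
   [(1 - x.c)^2 = ch^2 (R / 2) (1 - |x|^2) (1 - |c|^2)], and completing the
   square along [c] identifies it with the stated ellipsoid of revolution, a
   sphere when [c = 0]. *)

Section InnerProduct.
Variables (R : realType) (n : nat).
Implicit Types (u v w x y : 'rV[R]_n).

Lemma dotvC u v : dotv u v = dotv v u.
Proof. by apply: eq_bigr => i _; rewrite mulrC. Qed.

Lemma dotvDl u v w : dotv (u + v) w = dotv u w + dotv v w.
Proof. by rewrite /dotv -big_split; apply: eq_bigr => i _; rewrite !mxE mulrDl. Qed.

Lemma dotvZl k u v : dotv (k *: u) v = k * dotv u v.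
Proof. by rewrite /dotv mulr_sumr; apply: eq_bigr => i _; rewrite !mxE mulrA. Qed.

Lemma dotvDr u v w : dotv w (u + v) = dotv w u + dotv w v.
Proof. by rewrite dotvC dotvDl !(dotvC w). Qed.

Lemma dotvZr k u v : dotv v (k *: u) = k * dotv v u.
Proof. by rewrite dotvC dotvZl dotvC. Qed.

Lemma dotv0r u : dotv u 0 = 0.
Proof. by rewrite -(scale0r 0) dotvZr mul0r. Qed.

Lemma dotv_ge0 u : 0 <= dotv u u.
Proof. by apply: sumr_ge0 => i _; rewrite -expr2 sqr_ge0. Qed.

Lemma dotv_eq0 u : (dotv u u == 0) = (u == 0).
Proof.
apply/eqP/eqP => [u0|->]; last by rewrite dotv0r.
apply/rowP => j; rewrite mxE; apply/eqP; rewrite -sqrf_eq0 expr2; apply/eqP.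
by apply: (psumr_eq0P _ u0) => // i _; rewrite -expr2 sqr_ge0.
Qed.

Lemma dotv_gt0 u : (0 < dotv u u) = (u != 0).
Proof. by rewrite lt_neqAle dotv_ge0 andbT eq_sym dotv_eq0. Qed.

Lemma dotv_sqrDZ x w s :
  dotv (x + s *: w) (x + s *: w) = dotv x x + 2 * s * dotv x w + s ^+ 2 * dotv w w.
Proof. by rewrite !dotvDl !dotvDr !dotvZl !dotvZr (dotvC w x); ring. Qed.

Lemma cauchy_schwarz x y : dotv x y ^+ 2 <= dotv x x * dotv y y.
Proof.
have [->|y0] := eqVneq y 0; first by rewrite !dotv0r expr0n mulr0.
have yy0 : 0 < dotv y y by rewrite dotv_gt0.
have := dotv_ge0 (x + (- (dotv x y / dotv y y)) *: y).
rewrite dotv_sqrDZ.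
have -> : dotv x x + 2 * - (dotv x y / dotv y y) * dotv x y +
   (- (dotv x y / dotv y y)) ^+ 2 * dotv y y = dotv x x - dotv x y ^+ 2 / dotv y y.
  by field; rewrite gt_eqF.
by rewrite subr_ge0 ler_pdivrMr.
Qed.

Lemma enorm_sqr u : enorm u ^+ 2 = dotv u u.
Proof. by rewrite /enorm sqr_sqrtr // dotv_ge0. Qed.

Lemma enorm_ge0 u : 0 <= enorm u.
Proof. exact: sqrtr_ge0. Qed.

Lemma enorm_gt0 u : (0 < enorm u) = (u != 0).
Proof. by rewrite sqrtr_gt0 dotv_gt0. Qed.

Lemma enormZ k u : enorm (k *: u) = `|k| * enorm u.
Proof. by rewrite /enorm dotvZl dotvZr mulrA -expr2 sqrtrM ?sqr_ge0 // sqrtr_sqr. Qed.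

Lemma enorm_lt1 u : (enorm u < 1) = (dotv u u < 1).
Proof. by rewrite -enorm_sqr expr_lt1 ?enorm_ge0. Qed.

Lemma mem_unit_ball u : (u \in unit_ball R n) = (dotv u u < 1).
Proof. by rewrite -enorm_lt1; apply/idP/idP; rewrite in_setE. Qed.

Lemma mem_unit_sphere u : u \in unit_sphere R n -> dotv u u = 1.
Proof. by rewrite in_setE /unit_sphere /= -enorm_sqr => ->; rewrite expr1n. Qed.

End InnerProduct.

Section Hyperbolic.
Variable R : realType.
Implicit Types x y : R.

Lemma sh_sqr x : sh x ^+ 2 = ch x ^+ 2 - 1.
Proof.
have E0 : expR x != 0 by rewrite gt_eqF ?expR_gt0.
by rewrite /sh /ch expRN; field.
Qed.

Lemma ch_gt0 x : 0 < ch x.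
Proof. by rewrite divr_gt0 // addr_gt0 ?expR_gt0. Qed.

Lemma ler_sh : {mono @sh R : x y / x <= y}.
Proof.
apply: le_mono => x y xy.
by rewrite ltr_pM2r ?invr_gt0 // ltrD ?ltr_expR // ltrN2 ltr_expR ltrN2.
Qed.

Lemma sh_inj : injective (@sh R).
Proof. exact: inc_inj ler_sh. Qed.

Lemma sh0 : sh 0 = 0 :> R.
Proof. by rewrite /sh oppr0 subrr mul0r. Qed.

Lemma sh_ge0 x : 0 <= x -> 0 <= sh x.
Proof. by move=> x0; rewrite -sh0 ler_sh. Qed.

Lemma sh_gt0 x : 0 < x -> 0 < sh x.
Proof. by move=> x0; rewrite -sh0 (leW_mono ler_sh). Qed.

Lemma ch_sqr_gt1 x : 0 < x -> 1 < ch x ^+ 2.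
Proof. by move=> /sh_gt0 /(exprn_gt0 2); rewrite sh_sqr subr_gt0. Qed.

Lemma ch_sqr_inj : {in Num.nneg &, injective (fun x : R => ch x ^+ 2)}.
Proof.
move=> x y; rewrite !nnegrE => x0 y0 /= exy; apply: sh_inj.
by apply/eqP; rewrite -(eqrXn2 (_ : 0 < 2)%N) ?sh_ge0 // !sh_sqr exy.
Qed.

Lemma expR_half x : expR x = expR (x / 2) ^+ 2.
Proof. by rewrite expr2 -expRD -splitr. Qed.

Lemma sh_half x : sh x = 2 * sh (x / 2) * ch (x / 2).
Proof.
have E0 : expR (x / 2) != 0 by rewrite gt_eqF ?expR_gt0.
by rewrite /sh /ch !expRN expR_half; field.
Qed.

Lemma ch_half_sqr x : ch (x / 2) ^+ 2 = (expR x + (expR x)^-1 + 2) / 4.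
Proof.
have E0 : expR (x / 2) != 0 by rewrite gt_eqF ?expR_gt0.
by rewrite /ch expRN [expR x]expR_half; field.
Qed.

End Hyperbolic.

Section ScalarIdentities.
Variable R : realType.

Lemma quadratic_roots_outside (a b c : R) :
  0 < a -> c < 0 -> a + b + c < 0 ->
  exists s t, [/\ s < 0, 1 < t, a * s ^+ 2 + b * s + c = 0 & a * t ^+ 2 + b * t + c = 0].
Proof.
move=> a0 c0 abc0.
have disc0 : 0 <= b ^+ 2 - 4 * a * c by nra.
set q := Num.sqrt (b ^+ 2 - 4 * a * c).
have q2 : q ^+ 2 = b ^+ 2 - 4 * a * c by rewrite sqr_sqrtr.
have q0 : 0 <= q by apply: sqrtr_ge0.
have quad_at e : a * ((- b + e * q) / (2 * a)) ^+ 2 + b * ((- b + e * q) / (2 * a)) + c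
              = (e ^+ 2 * q ^+ 2 - (b ^+ 2 - 4 * a * c)) / (4 * a).
  by field; rewrite gt_eqF.
exists ((- b + (-1) * q) / (2 * a)), ((- b + 1 * q) / (2 * a)); split.
- rewrite pmulr_llt0 ?invr_gt0 ?mulr_gt0 //.
  have : b ^+ 2 < q ^+ 2 by rewrite q2; nra.
  nra.
- rewrite ltr_pdivlMr ?mulr_gt0 // mul1r.
  have : (2 * a + b) ^+ 2 < q ^+ 2 by rewrite q2; nra.
  nra.
- by rewrite quad_at sqrrN expr1n mul1r q2 subrr mul0r.
- by rewrite quad_at expr1n mul1r q2 subrr mul0r.
Qed.

(* [s] and [t] are the roots of [A z^2 + 2 B z + (X - 1)], so by Vieta
   [2 B = - A (s + t)] and [X - 1 = A s t]. *)
Lemma chord_cross_ratio (A B X s t : R) : 0 < A -> s < 0 -> 1 < t ->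
  X + 2 * s * B + s ^+ 2 * A = 1 -> X + 2 * t * B + t ^+ 2 * A = 1 ->
  let Q := (1 - s) * t / (- s * (t - 1)) in
  (Q + Q^-1 + 2) / 4 = (1 - (X + B)) ^+ 2 / ((1 - X) * (1 - (X + 2 * B + A))).
Proof.
move=> A0 s0 t1 es et Q.
have hB : 2 * B = - A * (s + t).
  have : (s - t) * (2 * B + A * (s + t))
         = (X + 2 * s * B + s ^+ 2 * A) - (X + 2 * t * B + t ^+ 2 * A) by ring.
  rewrite es et subrr => /eqP; rewrite mulf_eq0 subr_eq0 lt_eqF /=; last by lra.
  by move/eqP/(canRL (addrK _)); rewrite sub0r mulNr.
have hX : X = 1 + A * s * t by rewrite -es mulrAC hB; ring.
have -> : B = - A * (s + t) / 2 by rewrite -hB; field.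
have -> : 1 - (X + 2 * (- A * (s + t) / 2) + A) = A * (1 - s) * (t - 1).
  by rewrite hX; field.
rewrite /Q hX.
have sne0 : s != 0 by rewrite lt_eqF.
have tne0 : t != 0 by rewrite gt_eqF //; lra.
have t1ne0 : t - 1 != 0 by rewrite gt_eqF //; lra.
have s1ne0 : 1 - s != 0 by rewrite gt_eqF //; lra.
have Ane0 : A != 0 by rewrite gt_eqF.
by field; rewrite opprD addrA subrr add0r oppr_eq0 !mulf_neq0 ?t1ne0 ?s1ne0 ?Ane0 ?sne0 ?tne0.
Qed.

(* With [m = |c|], [p = x.c], [X = |x|^2] and [c' = D^-1 c], the numbers [al]
   and [N] are [(x - c').(c / |c|)] and [|x - c'|^2]; the ellipsoid equation
   minus one is a nonzero multiple of the difference of the two sides of the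
   quadric. *)
Lemma quadric_ellipsoid_scalar (m p X C S : R) :
  0 < m -> m < 1 -> 0 < S -> S ^+ 2 = C ^+ 2 - 1 ->
  let D := C ^+ 2 - m ^+ 2 * S ^+ 2 in
  let al := m^-1 * (p - D^-1 * m ^+ 2) in
  let N := X - 2 * D^-1 * p + D^-2 * m ^+ 2 in
  (1 - p) ^+ 2 = C ^+ 2 * (1 - X) * (1 - m ^+ 2) <->
  al ^+ 2 / (2^-1 * ((1 - m ^+ 2) * (2 * S * C)) / D) ^+ 2
    + (N - al ^+ 2) / (S ^+ 2 * (1 - m ^+ 2) / D) = 1.
Proof.
move=> m0 m1 S0 SC D al N.
have m2 : 1 - m ^+ 2 != 0 by rewrite subr_eq0 eq_sym lt_eqF // expr_lt1 // ltW.
have DE : D = 1 + S ^+ 2 * (1 - m ^+ 2) by rewrite /D SC; ring.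
have D0 : D != 0.
  by rewrite DE gt_eqF // ltr_pwDl // mulr_ge0 ?sqr_ge0 // subr_ge0 expr_le1 // ltW.
have C0 : C != 0 by rewrite -sqrf_eq0 gt_eqF //; have := exprn_gt0 2 S0; lra.
have CS : C ^+ 2 = 1 + S ^+ 2 by rewrite SC; ring.
have -> : (2^-1 * ((1 - m ^+ 2) * (2 * S * C)) / D) ^+ 2
          = (1 - m ^+ 2) ^+ 2 * S ^+ 2 * C ^+ 2 / D ^+ 2 by field.
set F := D / ((1 - m ^+ 2) ^+ 2 * C ^+ 2 * S ^+ 2).
have F0 : F != 0 by rewrite mulf_neq0 // invr_eq0 !mulf_neq0 // ?expf_neq0 // gt_eqF.
have key : al ^+ 2 / ((1 - m ^+ 2) ^+ 2 * S ^+ 2 * C ^+ 2 / D ^+ 2)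
    + (N - al ^+ 2) / (S ^+ 2 * (1 - m ^+ 2) / D) - 1
    = F * ((1 - p) ^+ 2 - C ^+ 2 * (1 - X) * (1 - m ^+ 2)).
  rewrite /F /al /N DE CS; field.
  by rewrite -CS -DE (gt_eqF S0) expf_neq0 // m2 D0 (gt_eqF m0).
split=> h.
- by apply/eqP; rewrite -subr_eq0 key h subrr mulr0.
- move: key; rewrite h subrr => /esym /eqP.
  by rewrite mulf_eq0 (negbTE F0) /= subr_eq0 => /eqP.
Qed.

End ScalarIdentities.

Section HilbertDistance.
Variables (R : realType) (n : nat).
Implicit Types (x y : 'rV[R]_n).

Lemma hilbert_ball_value_ch x y d : x != y -> hilbert_ball_value x y d ->
  0 < d /\ ch (d / 2) ^+ 2 = (1 - dotv x y) ^+ 2 / ((1 - dotv x x) * (1 - dotv y y)).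
Proof.
move=> xy [u [v [s [t [s0 [t1 [-> [-> [su [sv ->]]]]]]]]]].
set w := y - x in su sv *.
have w0 : 0 < dotv w w by rewrite dotv_gt0 subr_eq0 eq_sym.
have es := mem_unit_sphere su; rewrite dotv_sqrDZ in es.
have et := mem_unit_sphere sv; rewrite dotv_sqrDZ in et.
have -> : x + s *: w - y = (s - 1) *: w by apply/rowP => i; rewrite !mxE; ring.
have -> : x - (x + t *: w) = (- t) *: w by apply/rowP => i; rewrite !mxE; ring.
have -> : x + s *: w - x = s *: w by apply/rowP => i; rewrite !mxE; ring.
have -> : y - (x + t *: w) = (1 - t) *: w by apply/rowP => i; rewrite !mxE; ring.
have wne0 : enorm w != 0 by rewrite gt_eqF // sqrtr_gt0.
set Q := (1 - s) * t / (- s * (t - 1)).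
have -> : enorm ((s - 1) *: w) * enorm ((- t) *: w) /
          (enorm (s *: w) * enorm ((1 - t) *: w)) = Q.
  rewrite !enormZ normrN (ltr0_norm s0) (gtr0_norm (_ : 0 < t)); last by lra.
  have s1 : s < 1 by lra.
  rewrite !ltr0_norm ?subr_lt0 //.
  by rewrite /Q; field; rewrite !subr_eq0 (gt_eqF t1) (lt_eqF t1) (lt_eqF s0) wne0.
have Q1 : 1 < Q.
  rewrite /Q ltr_pdivlMr ?mul1r; first by nra.
  by apply: mulr_gt0; lra.
split; first exact: ln_gt0.
have ey : y = x + 1 *: w by rewrite scale1r /w addrC subrK.
rewrite ch_half_sqr lnK ?posrE ?(lt_trans ltr01) // {1}ey dotvDr dotvZr mul1r.
rewrite {1 2}ey dotv_sqrDZ expr1n !mul1r mulr1.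
exact: chord_cross_ratio.
Qed.

Lemma hilbert_ball_value_exists x y : dotv x x < 1 -> dotv y y < 1 -> x != y ->
  exists d, hilbert_ball_value x y d.
Proof.
move=> hx hy xy; set w := y - x.
have ey : y = x + 1 *: w by rewrite scale1r /w addrC subrK.
have w0 : 0 < dotv w w by rewrite dotv_gt0 subr_eq0 eq_sym.
have hy1 : dotv w w + 2 * dotv x w + (dotv x x - 1) < 0.
  by move: hy; rewrite ey dotv_sqrDZ; lra.
have hx1 : dotv x x - 1 < 0 by rewrite subr_lt0.
have [s [t [s0 t1 es et]]] := quadratic_roots_outside w0 hx1 hy1.
have on_sphere z : dotv w w * z ^+ 2 + 2 * dotv x w * z + (dotv x x - 1) = 0 ->
    x + z *: w \in unit_sphere R n.
  move=> hz; rewrite in_setE /unit_sphere /= /enorm dotv_sqrDZ.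
  by rewrite (_ : _ + _ = 1) ?sqrtr1 //; lra.
eexists; exists (x + s *: w), (x + t *: w), s, t.
by do !split => //; apply: on_sphere.
Qed.

Lemma hilbert_ball_ch x y : dotv x x < 1 -> dotv y y < 1 -> x != y ->
  0 < hilbert_ball x y /\
  ch (hilbert_ball x y / 2) ^+ 2 = (1 - dotv x y) ^+ 2 / ((1 - dotv x x) * (1 - dotv y y)).
Proof.
move=> hx hy xy; rewrite /hilbert_ball (negbTE xy).
case: xgetP => [d _|nod]; first exact: hilbert_ball_value_ch.
by have [d /nod] := hilbert_ball_value_exists hx hy xy.
Qed.

End HilbertDistance.

Section HilbertSphere.
Variables (R : realType) (n : nat).
Implicit Types (x c : 'rV[R]_n).

Definition hilbert_quadric c (K : R) : set 'rV[R]_n :=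
  [set x | (1 - dotv x c) ^+ 2 = K * (1 - dotv x x) * (1 - dotv c c)].

Lemma hilbert_quadric_in_ball c (K : R) x : dotv c c < 1 -> 1 < K ->
  hilbert_quadric c K x -> dotv x x < 1 /\ x != c.
Proof.
rewrite /hilbert_quadric /= => c1 K1 hq.
have KC : 0 < K * (1 - dotv c c) by rewrite mulr_gt0 ?subr_gt0 //; lra.
have x1 : dotv x x <= 1.
  by rewrite -subr_ge0 -(pmulr_rge0 _ KC) mulrAC -hq sqr_ge0.
split.
- rewrite lt_neqAle x1 andbT; apply/eqP => xx1.
  move: hq; rewrite xx1 subrr mulr0 mul0r => /eqP; rewrite sqrf_eq0 subr_eq0 => /eqP xc1.
  by have := cauchy_schwarz x c; rewrite -xc1 xx1 expr1n mul1r; lra.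
- apply/eqP => xc; move: hq; rewrite xc => hq.
  have : 0 < (K - 1) * (1 - dotv c c) ^+ 2 by rewrite mulr_gt0 ?exprn_gt0 ?subr_gt0 //; lra.
  lra.
Qed.

Lemma hilbert_sphere_quadric c r : dotv c c < 1 -> 0 < r ->
  hilbert_sphere c r = hilbert_quadric c (ch (r / 2) ^+ 2).
Proof.
move=> c1 r0; have r2 : 0 < r / 2 by rewrite divr_gt0.
have c1' : 1 - dotv c c != 0 by rewrite subr_eq0 gt_eqF.
apply/seteqP; split=> x; rewrite /hilbert_sphere /hilbert_quadric /= mem_unit_ball.
- move=> [x1 hxc].
  have xc : x != c by apply: contraTneq r0 => xc; rewrite -hxc xc /hilbert_ball eqxx ltxx.
  have [_] := hilbert_ball_ch x1 c1 xc; rewrite hxc => ->.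
  by field; rewrite c1' subr_eq0 gt_eqF.
- move=> hq; have [x1 xc] := hilbert_quadric_in_ball c1 (ch_sqr_gt1 r2) hq.
  split=> //; have [h0 hch] := hilbert_ball_ch x1 c1 xc.
  apply: (mulIf (_ : 2^-1 != 0)) => //; apply: ch_sqr_inj; rewrite ?nnegrE ?divr_ge0 ?ltW //=.
  by rewrite hch hq; field; rewrite c1' subr_eq0 gt_eqF.
Qed.

Lemma hilbert_sphere_center0 r : 0 < r ->
  hilbert_sphere (0 : 'rV[R]_n) r = esphere 0 (th (r / 2)).
Proof.
move=> r0; rewrite hilbert_sphere_quadric ?dotv0r //.
have C0 : ch (r / 2) != 0 by rewrite gt_eqF ?ch_gt0.
have th0 : 0 <= th (r / 2) by rewrite divr_ge0 ?ltW ?ch_gt0 ?sh_gt0 ?divr_gt0.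
have thE : th (r / 2) ^+ 2 = 1 - (ch (r / 2) ^+ 2)^-1.
  by rewrite /th expr_div_n sh_sqr; field.
apply/seteqP; split=> x; rewrite /hilbert_quadric /esphere /= !dotv0r !subr0 expr1n mulr1 => h.
- apply/eqP; rewrite -(eqrXn2 (_ : 0 < 2)%N) ?enorm_ge0 // enorm_sqr thE; apply/eqP.
  by apply: (mulfI (expf_neq0 2 C0)); rewrite mulrBr mulfV ?expf_neq0 //; lra.
- by rewrite -enorm_sqr h thE; field.
Qed.

Lemma hilbert_quadric_ellipsoid c r : 0 < enorm c -> enorm c < 1 -> 0 < r ->
  let D := ch (r / 2) ^+ 2 - enorm c ^+ 2 * sh (r / 2) ^+ 2 in
  hilbert_quadric c (ch (r / 2) ^+ 2) =
  ellipsoid_rev (D^-1 *: c) ((enorm c)^-1 *: c) (2^-1 * ((1 - enorm c ^+ 2) * sh r) / D)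
    (sh (r / 2) * Num.sqrt (1 - enorm c ^+ 2) / Num.sqrt D).
Proof.
move=> m0 m1 r0 D.
have S0 : 0 < sh (r / 2) by rewrite sh_gt0 ?divr_gt0.
have m2 : 0 <= 1 - enorm c ^+ 2 by rewrite subr_ge0 expr_le1 ?ltW.
have D0 : 0 < D.
  have : 0 <= sh (r / 2) ^+ 2 * (1 - enorm c ^+ 2) by rewrite mulr_ge0 ?sqr_ge0.
  by rewrite /D (sh_sqr (r / 2)); lra.
apply/funext => x; apply/propext; rewrite /hilbert_quadric /ellipsoid_rev /=.
have eal : dotv (x - D^-1 *: c) ((enorm c)^-1 *: c)
         = (enorm c)^-1 * (dotv x c - D^-1 * enorm c ^+ 2).
  by rewrite dotvZr -scaleNr dotvDl dotvZl enorm_sqr mulNr.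
have eN : enorm (x - D^-1 *: c) ^+ 2
          = dotv x x - 2 * D^-1 * dotv x c + D^-2 * enorm c ^+ 2.
  by rewrite enorm_sqr -scaleNr dotv_sqrDZ enorm_sqr; field; rewrite gt_eqF.
have eb : (sh (r / 2) * Num.sqrt (1 - enorm c ^+ 2) / Num.sqrt D) ^+ 2
          = sh (r / 2) ^+ 2 * (1 - enorm c ^+ 2) / D.
  by rewrite expr_div_n exprMn (sqr_sqrtr m2) (sqr_sqrtr (ltW D0)).
rewrite eal eN eb sh_half -(enorm_sqr c).
exact: quadric_ellipsoid_scalar (sh_sqr _).
Qed.

End HilbertSphere.

Theorem theorem4p3 (R : realType) (n : nat) (c : 'rV[R]_n) (r : R) :
  c \in unit_ball R n -> 0 < r ->
  let D := ch (r / 2) ^+ 2 - enorm c ^+ 2 * sh (r / 2) ^+ 2 in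
  let c' := D^-1 *: c in
  let amin := 2^-1 * ((1 - enorm c ^+ 2) * sh r) / D in
  let amax := sh (r / 2) * Num.sqrt (1 - enorm c ^+ 2) / Num.sqrt D in
  (c != 0 ->
     hilbert_sphere c r = ellipsoid_rev c' ((enorm c)^-1 *: c) amin amax)
  /\ (c = 0 -> hilbert_sphere c r = esphere 0 (th (r / 2))).
Proof.
move=> c1 r0 D c' amin amax.
split=> [c0|->]; last exact: hilbert_sphere_center0.
rewrite hilbert_sphere_quadric -?mem_unit_ball //.
by apply: hilbert_quadric_ellipsoid; rewrite ?enorm_gt0 ?enorm_lt1 -?mem_unit_ball.
Qed.
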